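(* Let $G$ be a finite connected graph with vertices $u,v$ such that $uv\in E(G)$, $\deg_G(u)\ge 2$ and $\deg_G(v)=1$. Let $G_v$ be obtained from $G$ by adding a new vertex $x$ and the edge $ux$. Then $\mathrm{cat}(G_v,a)=\mathrm{cat}(G,a)$ for all $a\in V(G)$, and $\mathrm{cat}(G_v,x)=1$. In particular $\mathrm{cat}(G_v)=\mathrm{cat}(G)$.
   Context: Cat Herding is played on a simple graph $G$. The cat first places its token on a vertex. Then the players alternate, the herder moving first: the herder deletes one edge of the current graph, and then, unless the cat's current vertex has degree $0$ in the current graph, the cat moves its token along a path with at least one edge in the current graph to a different vertex. The cat is captured when its vertex has degree $0$ in the current graph, and the game ends; the score is the number of edges deleted. For a finite graph $G$ and $v\in V(G)$, $\mathrm{cat}(G,v)$ is the score under optimal play (herder minimizing, cat maximizing) when the cat starts at $v$, and $\mathrm{cat}(G)=\max_{v}\mathrm{cat}(G,v)$. *)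

From mathcomp Require Import all_boot.
Set Implicit Arguments. Unset Strict Implicit. Unset Printing Implicit Defensive.

(* A finite simple graph on vertex type T is given by its edge set
   E : {set {set T}}, every edge being a 2-element subset of T. *)
Section CatHerding.
Variable T : finType.

Definition simple_graph (E : {set {set T}}) : Prop :=
  forall e, e \in E -> #|e| = 2.

Definition adj (E : {set {set T}}) : rel T := fun x y => [set x; y] \in E.

Definition deg (E : {set {set T}}) (c : T) : nat := #|[set e in E | c \in e]|.

Definition connected_graph (E : {set {set T}}) : Prop :=
  forall x y : T, connect (adj E) x y.

(* Game value with fuel n (n = number of edges of the current graph).
   State: current edge set E, cat at c, herder to move.
   - if c has degree 0 the cat is captured: score 0;
   - otherwise the herder picks an edge e of E (minimizing), deletes it
     (this counts 1), and then the cat (maximizing) moves to any vertex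
     c' <> c connected to c in E minus e; if there is no such c' (i.e.
     c has become isolated) the game ends (empty max = 0).
   The min is taken with neutral element #|E|, which is an upper bound
   for every term (the score never exceeds the number of edges), and the
   range is nonempty whenever deg E c > 0. *)
Fixpoint catv (n : nat) (E : {set {set T}}) (c : T) : nat :=
  match n with
  | 0 => 0
  | n'.+1 =>
    if deg E c == 0 then 0 else
    \big[minn/#|E|]_(e in E)
       (1 + \max_(c' | connect (adj (E :\ e)) c c' && (c' != c))
               catv n' (E :\ e) c')
  end.

Definition cat_num (E : {set {set T}}) (v : T) : nat := catv #|E| E v.

Definition catG (E : {set {set T}}) : nat := \max_(v : T) cat_num E v.

End CatHerding.

(* G_v : add a new vertex x = None to G (vertex type option T) joined to u. *)
Definition add_leaf (T : finType) (E : {set {set T}}) (u : T)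
  : {set {set option T}} :=
  (fun e : {set T} => (@Some T) @: e) @: E :|: [set [set Some u; None]].

From mathcomp Require Import all_boot.
Set Implicit Arguments. Unset Strict Implicit. Unset Printing Implicit Defensive.

(* Relabelling vertices through [Some], G_v is G plus a second leaf x at the
   vertex u that already carries the leaf v.  Deleting an edge never helps the
   cat, which gives cat(G, a) <= cat(G_v, a), and x, being a leaf, has value 1.
   For the converse, by induction on the number of edges, the herder copies in
   G_v an optimal G-strategy.  The only move that cannot be copied verbatim is
   the deletion of the leaf edge uv; there the herder deletes another edge uw at
   u instead (deg u >= 2).  This is no worse: the leaves v and x are worth at
   most 1 to the cat, turning uw into a pendant edge at u only helps the herder,
   and pendant edges in components the cat cannot reach are irrelevant. *)

Lemma card_ind (X : finType) (P : {set X} -> Prop) :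
  (forall A : {set X}, (forall B : {set X}, #|B| < #|A| -> P B) -> P A) ->
  forall A, P A.
Proof.
move=> IH A; move: {2}#|A|.+1 (ltnSn #|A|) => n.
elim: n A => // n IHn A HA; apply: IH => B HB.
by apply: IHn; apply: leq_trans HB _.
Qed.

Lemma connect_ind (X : finType) (e : rel X) (P : X -> Prop) a b :
  P a -> (forall y z, P y -> e y z -> P z) -> connect e a b -> P b.
Proof.
move=> Pa step /connectP [p pth ->]; elim: p a Pa pth => //= y p IH a Pa.
by case/andP=> eay pth; apply: IH pth; apply: step eay.
Qed.

Lemma bigmin_leq (I : finType) (P : pred I) (F : I -> nat) d i :
  P i -> \big[minn/d]_(j | P j) F j <= F i.
Proof.
rewrite unlock /reducebig; move: (mem_index_enum i).
elim: (index_enum I) => //= a r IH; rewrite inE; case/orP => [/eqP<- ->|ir Pi].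
  exact: geq_minl.
by case: (P a); rewrite ?geq_min IH ?orbT.
Qed.

Lemma bigmin_leq_idx (I : finType) (P : pred I) (F : I -> nat) d :
  \big[minn/d]_(j | P j) F j <= d.
Proof. by elim/big_rec: _ => // i m _ Hm; rewrite geq_min Hm orbT. Qed.

Lemma setU1D1 (X : finType) (A : {set X}) b e : e != b ->
  (A :|: [set b]) :\ e = (A :\ e) :|: [set b].
Proof. by move=> eb; apply/setP=> z; rewrite !inE; case: eqVneq => // ->; rewrite (negPf eb). Qed.

Lemma setD1C (X : finType) (A : {set X}) a b : A :\ a :\ b = A :\ b :\ a.
Proof. by apply/setP=> z; rewrite !inE andbCA. Qed.

Section Graphs.
Variable T : finType.
Implicit Types (E A B : {set {set T}}) (e : {set T}) (a b c : T).

Lemma adj_sym E : symmetric (adj E).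
Proof. by move=> a b; rewrite /adj setUC. Qed.

Lemma connect_adjC E a b : connect (adj E) a b = connect (adj E) b a.
Proof. exact: sym_connect_sym (adj_sym E) a b. Qed.

Lemma connect_subset A B a b : A \subset B ->
  connect (adj A) a b -> connect (adj B) a b.
Proof.
move=> sAB; apply: (connect_ind (P := connect (adj B) a)) => [|y z ay /(subsetP sAB) yz].
  exact: connect0.
exact: connect_trans ay (connect1 yz).
Qed.

Lemma deg0P E c : reflect (forall e, e \in E -> c \notin e) (deg E c == 0).
Proof.
rewrite /deg cards_eq0; apply: (iffP eqP) => [E0 e eE|H].
  by apply/negP => ce; have := in_set0 e; rewrite -E0 inE eE ce.
by apply/setP=> e; rewrite !inE; apply/negP=> /andP[/H/negP].
Qed.

Lemma deg0_notin E c e : deg E c = 0 -> e \in E -> c \notin e.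
Proof. by move/eqP/deg0P; apply. Qed.

Lemma deg_gt0P E c : reflect (exists2 e, e \in E & c \in e) (deg E c != 0).
Proof.
apply: (iffP idP) => [|[e eE ce]]; last by apply/negP=> /deg0P/(_ e eE); rewrite ce.
by rewrite /deg cards_eq0 => /set0Pn [e]; rewrite inE => /andP[]; exists e.
Qed.

Lemma deg_le_card E c : deg E c <= #|E|.
Proof. by apply: subset_leq_card; apply/subsetP=> e; rewrite inE => /andP[]. Qed.

Lemma deg_subset A B c : A \subset B -> deg A c <= deg B c.
Proof.
move=> sAB; apply: subset_leq_card; apply/subsetP=> e; rewrite !inE.
by case/andP=> /(subsetP sAB) -> ->.
Qed.

Lemma deg_setU1 E e c : deg (E :|: [set e]) c <= deg E c + (c \in e).
Proof.
rewrite /deg; case ce: (c \in e).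
  rewrite addn1; apply: leq_trans (_ : #|e |: [set f in E | c \in f]| <= _).
    apply: subset_leq_card; apply/subsetP=> f.
    by rewrite !inE => /andP[/orP[->|->]] ->; rewrite ?orbT.
  by rewrite cardsU1; case: (_ \notin _).
rewrite addn0; apply: subset_leq_card; apply/subsetP=> f; rewrite !inE.
by case/andP=> /orP[-> -> //|/eqP->]; rewrite ce.
Qed.

Lemma deg_setU1_notin E e c : c \notin e -> deg (E :|: [set e]) c = deg E c.
Proof.
move=> ce; apply/eqP; rewrite eqn_leq [_ <= deg (_ :|: _) _]deg_subset ?subsetUl // andbT.
by apply: leq_trans (deg_setU1 E e c) _; rewrite (negPf ce) addn0.
Qed.

Lemma deg0_subset A B c : A \subset B -> deg B c = 0 -> deg A c = 0.
Proof. by move=> sAB B0; apply/eqP; rewrite -leqn0 -B0 deg_subset. Qed.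

Lemma deg_setD1 E e c : deg E c <= (deg (E :\ e) c).+1.
Proof.
rewrite /deg -add1n; apply: leq_trans (_ : #|[set e] :|: [set f in E :\ e | c \in f]| <= _).
  by apply: subset_leq_card; apply/subsetP=> f; rewrite !inE; case: eqVneq.
by apply: leq_trans (leq_card_setU _ _) _; rewrite cards1.
Qed.

Lemma deg_le1_uniq E c e f : deg E c <= 1 ->
  e \in E -> c \in e -> f \in E -> c \in f -> e = f.
Proof.
move=> d1 eE ce fE cf; apply/eqP; apply: contraTT d1 => ef; rewrite -ltnNge.
by rewrite /deg (cardsD1 e) (cardsD1 f) !inE eE ce fE cf eq_sym ef.
Qed.

Lemma connect_deg0 E c b : deg E c = 0 -> connect (adj E) c b -> b = c.
Proof.
move/eqP/deg0P=> c0; apply: (connect_ind (P := eq^~ c)) => // y z -> /c0.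
by rewrite set21.
Qed.

Lemma simple_neighbour E c : simple_graph E -> deg E c != 0 ->
  exists2 y, y != c & adj E c y.
Proof.
move=> sE /deg_gt0P [e eE ce].
have /cards2P [a [b [ab De]]] : #|e| == 2 by rewrite sE.
move: ce eE; rewrite De !inE => /orP[]/eqP-> eE; first by exists b; rewrite 1?eq_sym.
by exists a; rewrite // /adj setUC.
Qed.

Lemma connect_add_pendant E u x a b : u != x -> deg E x = 0 -> a != x ->
  connect (adj (E :|: [set [set u; x]])) a b ->
  connect (adj E) a (if b == x then u else b).
Proof.
move=> ux /eqP/deg0P x0 ax; have ux_end w : w \in [set u; x] -> (if w == x then u else w) = u.
  by case/set2P=> ->; rewrite ?eqxx ?(negPf ux).
apply: (connect_ind (P := fun b => connect (adj E) a (if b == x then u else b))).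
  by rewrite (negPf ax).
move=> y z ay; rewrite /adj inE => /orP[yzE|/set1P yzx].
  have [yx zx] : y != x /\ z != x.
    by split; apply: contraNneq (x0 _ yzE) => <-; rewrite !inE eqxx ?orbT.
  by move: ay; rewrite (negPf yx) (negPf zx) => /connect_trans; apply; apply: connect1.
by rewrite ux_end -?yzx ?set22 //; rewrite ux_end -?yzx ?set21 in ay.
Qed.

Lemma simple_graph_subset A B : A \subset B -> simple_graph B -> simple_graph A.
Proof. by move=> sAB sB e /(subsetP sAB) /sB. Qed.

Lemma simple_graph_setU1 E a b : simple_graph E -> a != b ->
  simple_graph (E :|: [set [set a; b]]).
Proof. by move=> sE ab e; rewrite inE => /orP[/sE //|/set1P ->]; rewrite cards2 ab. Qed.

Lemma connect_pendant_component E a b c : [set a; b] \in E ->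
  deg E a <= 1 -> deg E b <= 1 -> connect (adj E) a c -> c \in [set a; b].
Proof.
move=> abE a1 b1; apply: (connect_ind (P := fun z => z \in [set a; b])); first exact: set21.
move=> y z /set2P yab yzE; suff -> : [set a; b] = [set y; z] by rewrite set22.
case: yab yzE => -> yzE; [apply: deg_le1_uniq a1 abE _ yzE _ | apply: deg_le1_uniq b1 abE _ yzE _];
  by rewrite ?set21 ?set22.
Qed.

Lemma deg_gt1_connect E a b c : [set a; b] \in E -> deg E b <= 1 ->
  connect (adj E) c a -> c != a -> c != b -> 1 < deg E a.
Proof.
move=> abE b1 ca ca' cb; rewrite ltnNge; apply/negP=> a1.
move: (connect_pendant_component abE a1 b1 (etrans (connect_adjC _ _ _) ca)).
by case/set2P=> c_ab; [move: ca' | move: cb]; rewrite c_ab eqxx.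
Qed.

End Graphs.

Section CatGame.
Variable T : finType.
Implicit Types (E A B : {set {set T}}) (e : {set T}) (a b c y z : T).

Definition cat_reply E c :=
  \max_(y | connect (adj E) c y && (y != c)) cat_num E y.

Lemma cat_numE E c : cat_num E c =
  if deg E c == 0 then 0 else \big[minn/#|E|]_(e in E) (1 + cat_reply (E :\ e) c).
Proof.
rewrite /cat_num; case En: #|E| => [|n] /=.
  by have := deg_le_card E c; rewrite En leqn0 => ->.
case: ifP => // _; rewrite En; apply: eq_bigr => e eE.
have En' : #|E :\ e| = n by move: (cardsD1 e E); rewrite eE En add1n => -[].
by rewrite /cat_reply /cat_num En'.
Qed.

Lemma cat_num_deg0 E c : deg E c = 0 -> cat_num E c = 0.
Proof. by rewrite cat_numE => ->. Qed.

Lemma cat_num_le_del E e c : e \in E -> cat_num E c <= 1 + cat_reply (E :\ e) c.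
Proof. by move=> eE; rewrite cat_numE; case: ifP => // _; apply: bigmin_leq. Qed.

Lemma cat_num_le_card E c : cat_num E c <= #|E|.
Proof. by rewrite cat_numE; case: ifP => // _; apply: bigmin_leq_idx. Qed.

Lemma cat_reply_le E c m :
  (forall y, connect (adj E) c y -> y != c -> cat_num E y <= m) -> cat_reply E c <= m.
Proof. by move=> H; apply/bigmax_leqP => y /andP[]; apply: H. Qed.

Lemma leq_cat_reply E c y :
  connect (adj E) c y -> y != c -> cat_num E y <= cat_reply E c.
Proof. by move=> cy yc; apply: (leq_bigmax_cond (P := fun y => _ && _)); rewrite cy. Qed.

Lemma cat_num_opt E c : deg E c != 0 ->
  exists2 e, e \in E & cat_num E c = 1 + cat_reply (E :\ e) c.
Proof.
move=> dc; have /deg_gt0P [e0 e0E _] := dc.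
have [e eE' Hmin] := arg_minnP (fun e => 1 + cat_reply (E :\ e) c) e0E.
have eE : e \in E by [].
exists e => //; rewrite cat_numE (negPf dc); apply/eqP; rewrite eqn_leq bigmin_leq //=.
elim/big_rec: _ => [|f m fE]; last by rewrite leq_min Hmin.
rewrite [#|E|](cardsD1 e) eE leq_add2l; apply: cat_reply_le => y _ _.
exact: cat_num_le_card.
Qed.

Lemma cat_num_gt0 E c : deg E c != 0 -> 0 < cat_num E c.
Proof. by case/cat_num_opt=> e _ ->. Qed.

Lemma cat_num_deg_le1 E c : deg E c <= 1 -> cat_num E c <= 1.
Proof.
move=> d1; have [/eqP/cat_num_deg0 -> //|/deg_gt0P [e eE ce]] := boolP (deg E c == 0).
apply: leq_trans (cat_num_le_del c eE) _; rewrite -[X in _ <= X]addn0 leq_add2l.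
have c0 : deg (E :\ e) c = 0.
  apply/eqP; apply/deg0P=> f; rewrite !inE => /andP[fe fE].
  by apply: contraNN fe => cf; apply/eqP; apply: deg_le1_uniq d1 fE cf eE ce.
apply: cat_reply_le => y /(connect_deg0 c0) ->.
by rewrite eqxx.
Qed.

Lemma cat_reply_gt0 E c a b : [set a; b] \in E -> a != b ->
  connect (adj E) c a -> 0 < cat_reply E c.
Proof.
move=> abE ab ca.
have cb : connect (adj E) c b by apply: connect_trans ca (connect1 (abE : adj E a b)).
have [z [cz zc zab]] : exists z, [/\ connect (adj E) c z, z != c & z \in [set a; b]].
  case: (eqVneq a c) => [ac|ac]; last by exists a; rewrite set21; split.
  by move: cb; rewrite -ac => cb; exists b; rewrite eq_sym set22; split.
apply: leq_trans (leq_cat_reply cz zc); apply: cat_num_gt0.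
by apply/deg_gt0P; exists [set a; b].
Qed.

Lemma cat_reply_mono A B c : A \subset B ->
  (forall z, cat_num A z <= cat_num B z) -> cat_reply A c <= cat_reply B c.
Proof.
move=> sAB AB; apply: cat_reply_le => z cz zc; apply: leq_trans (AB z) _.
exact: leq_cat_reply (connect_subset sAB cz) zc.
Qed.

Lemma cat_num_setD1 E f y : f \in E -> cat_num (E :\ f) y <= cat_num E y.
Proof.
elim/card_ind: E f y => E IH f y fE.
have [/eqP/cat_num_deg0 -> //|dEf] := boolP (deg (E :\ f) y == 0).
have dE : deg E y != 0 by apply: contraNneq dEf => /(deg0_subset (subsetDl _ _)) ->.
have smaller g : g \in E -> #|E :\ g| < #|E| by rewrite (cardsD1 g E) => ->.
have [e eE ->] := cat_num_opt dE.
case: (eqVneq e f) => [->|ef].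
  have [g gEf yg] := deg_gt0P _ _ dEf.
  apply: leq_trans (cat_num_le_del y gEf) _; rewrite leq_add2l.
  by apply: cat_reply_mono (subsetDl _ _) _ => z; apply: IH (smaller f fE) _ _ gEf.
have eEf : e \in E :\ f by rewrite !inE ef.
apply: leq_trans (cat_num_le_del y eEf) _; rewrite leq_add2l.
rewrite setD1C; apply: cat_reply_mono (subsetDl _ _) _ => z.
by apply: IH (smaller e eE) _ _ _; rewrite !inE eq_sym ef.
Qed.

Lemma cat_num_le_reply E c : deg E c != 0 -> cat_num E c <= 1 + cat_reply E c.
Proof.
case/deg_gt0P=> e eE _; apply: leq_trans (cat_num_le_del c eE) _.
by rewrite leq_add2l; apply: cat_reply_mono (subsetDl _ _) _ => z; apply: cat_num_setD1.
Qed.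

End CatGame.

Section PendantEdge.
Variables (T : finType) (u x : T).
Hypothesis ux : u != x.
Implicit Types (E H K : {set {set T}}) (e : {set T}) (w y z : T).

Lemma deg_pendant_end E : deg E x = 0 -> deg (E :|: [set [set u; x]]) x <= 1.
Proof. by move=> x0; apply: leq_trans (deg_setU1 _ _ _) _; rewrite x0 set22. Qed.

Lemma cat_num_add_pendant_far H y : deg H x = 0 -> ~~ connect (adj H) y u -> y != x ->
  cat_num (H :|: [set [set u; x]]) y <= cat_num H y.
Proof.
elim/card_ind: H y => H IH y x0 yu yx.
have yux : y \notin [set u; x].
  by rewrite !inE negb_or yx andbT; apply: contraNneq yu => ->; apply: connect0.
have [d0|dH] := boolP (deg H y == 0).
  by rewrite cat_num_deg0 // deg_setU1_notin //; apply/eqP.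
have [e eH ->] := cat_num_opt dH.
have eux : e != [set u; x] by apply: contraNneq (deg0_notin x0 eH) => ->; apply: set22.
have x0' : deg (H :\ e) x = 0 by apply: deg0_subset (subsetDl _ _) x0.
apply: leq_trans (cat_num_le_del y (_ : e \in _)) _; first by rewrite inE eH.
rewrite leq_add2l setU1D1 //; apply: cat_reply_le => z yz zy.
have := connect_add_pendant ux x0' yx yz.
case: eqVneq => [_ /(connect_subset (subsetDl _ _)) yu'|zx yz']; first by rewrite yu' in yu.
apply: leq_trans (leq_cat_reply yz' zy); apply: IH => //.
  by rewrite (cardsD1 e H) eH.
apply: contra yu => zu; apply: connect_subset (subsetDl H [set e]) _.
exact: connect_trans yz' zu.
Qed.

Lemma cat_num_swap_pendant K w y : [set u; w] \in K -> u != w -> deg K x = 0 -> y != x ->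
  cat_num ((K :\ [set u; w]) :|: [set [set u; x]]) y <= cat_num K y.
Proof.
elim/card_ind: K y => K IH y uwK uw x0 yx.
set R := _ :|: _.
have uxK : [set u; x] \notin K by apply/negP=> /(deg0_notin x0); rewrite set22.
have [d0|dR] := boolP (deg R y == 0); first by rewrite cat_num_deg0 //; apply/eqP.
have dK : deg K y != 0.
  case/deg_gt0P: dR => f; rewrite !inE => /orP[/andP[_ fK] yf|/eqP->].
    by apply/deg_gt0P; exists f.
  case/set2P=> [->|yx']; last by rewrite yx' eqxx in yx.
  by apply/deg_gt0P; exists [set u; w]; rewrite ?set21.
have [e eK ->] := cat_num_opt dK.
case: (eqVneq e [set u; w]) => [->|euw].
  apply: leq_trans (cat_num_le_del y (_ : [set u; x] \in R)) _; first by rewrite !inE eqxx orbT.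
  by rewrite /R setUC setU1K // !inE negb_and uxK orbT.
have eux : e != [set u; x] by apply: contraNneq uxK => <-.
apply: leq_trans (cat_num_le_del y (_ : e \in R)) _; first by rewrite !inE euw eK.
rewrite leq_add2l /R setU1D1 // setD1C.
have uwKe : [set u; w] \in K :\ e by rewrite !inE eq_sym euw.
have x0' : deg (K :\ e :\ [set u; w]) x = 0 by rewrite setDDl; apply: deg0_subset (subsetDl _ _) x0.
apply: cat_reply_le => z yz zy.
have := connect_add_pendant ux x0' yx yz.
case: eqVneq => [-> yu|zx /(connect_subset (subsetDl _ _)) yz'].
  apply: leq_trans (cat_num_deg_le1 (deg_pendant_end x0')) _.
  exact: cat_reply_gt0 uwKe uw (connect_subset (subsetDl _ _) yu).
apply: leq_trans (leq_cat_reply yz' zy); apply: IH => //.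
  by rewrite (cardsD1 e K) eK.
exact: deg0_subset (subsetDl _ _) x0.
Qed.

End PendantEdge.

Section LeafTwin.
Variables (T : finType) (u v x : T).
Hypotheses (uv : u != v) (ux : u != x) (vx : v != x).
Implicit Types (D K : {set {set T}}) (c y : T).

(* The condition at [u] cannot be dropped: on the single edge uv the cat at u
   scores 1, on the path v u x it scores 2. *)
Definition leaf_twin_harmless D := forall c,
  simple_graph D -> [set u; v] \in D -> deg D v <= 1 -> deg D x = 0 -> c != x ->
  (c = u -> 1 < deg D u) ->
  cat_num (D :|: [set [set u; x]]) c <= cat_num D c.

Lemma x_notin_uv : x \notin [set u; v].
Proof. by rewrite !inE negb_or !(eq_sym x) ux vx. Qed.

Lemma v_notin_ux : v \notin [set u; x].
Proof. by rewrite !inE negb_or eq_sym uv. Qed.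

Lemma cat_num_add_leaves_far K c : deg K v = 0 -> deg K x = 0 ->
  c != v -> c != x -> ~~ connect (adj K) c u -> deg K c != 0 ->
  cat_num (K :|: [set [set u; v]] :|: [set [set u; x]]) c <= 1 + cat_reply K c.
Proof.
move=> v0 x0 cv cx ncu dc.
have ncu' : ~~ connect (adj (K :|: [set [set u; v]])) c u.
  by apply: contra ncu => /(connect_add_pendant uv v0 cv); rewrite (negPf uv).
have x0' : deg (K :|: [set [set u; v]]) x = 0 by rewrite deg_setU1_notin ?x_notin_uv.
apply: leq_trans (cat_num_add_pendant_far ux x0' ncu' cx) _.
apply: leq_trans (cat_num_add_pendant_far uv v0 ncu cv) _.
exact: cat_num_le_reply.
Qed.

Lemma cat_num_add_leaves_near K c :
  (forall D, #|D| <= #|K| -> leaf_twin_harmless D) ->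
  simple_graph K -> deg K v = 0 -> deg K x = 0 ->
  c != v -> c != x -> connect (adj K) c u -> deg K c != 0 ->
  cat_num (K :|: [set [set u; v]] :|: [set [set u; x]]) c <= 1 + cat_reply K c.
Proof.
move=> IH sK v0 x0 cv cx cu dc.
have du : deg K u != 0.
  case: (eqVneq c u) => [<- //|c_u]; apply: contra c_u => /eqP u0.
  by rewrite (connect_deg0 u0 (etrans (connect_adjC _ _ _) cu)).
have [w wu uwK] := simple_neighbour sK du; rewrite /adj in uwK.
have uw : u != w by rewrite eq_sym.
have uwv : [set u; w] != [set u; v] by apply: contraNneq (deg0_notin v0 uwK) => ->; apply: set22.
have uwx : [set u; w] != [set u; x] by apply: contraNneq (deg0_notin x0 uwK) => ->; apply: set22.
set D' := K :\ [set u; w] :|: [set [set u; v]].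
have v0' : deg (K :\ [set u; w]) v = 0 by apply: deg0_subset (subsetDl _ _) v0.
have v1 : deg D' v <= 1 := deg_pendant_end u v0'.
have x0' : deg D' x = 0.
  by rewrite deg_setU1_notin ?x_notin_uv //; apply: deg0_subset (subsetDl _ _) x0.
apply: leq_trans (cat_num_le_del c (_ : [set u; w] \in _)) _; first by rewrite !inE uwK.
rewrite leq_add2l !setU1D1 //; apply: cat_reply_le => c' cc' c'c.
have reply_pos : 0 < cat_reply K c := cat_reply_gt0 uwK uw cu.
case: (eqVneq c' x) => [->|c'x].
  exact: leq_trans (cat_num_deg_le1 (deg_pendant_end u x0')) reply_pos.
case: (eqVneq c' v) => [->|c'v].
  by apply: leq_trans (cat_num_deg_le1 _) reply_pos; rewrite deg_setU1_notin ?v_notin_ux.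
have cc1 := connect_add_pendant ux x0' cx cc'; rewrite (negPf c'x) in cc1.
have cc2 := connect_add_pendant uv v0' cv cc1; rewrite (negPf c'v) in cc2.
apply: leq_trans (leq_cat_reply (connect_subset (subsetDl _ _) cc2) c'c).
apply: leq_trans (cat_num_swap_pendant uv uwK uw v0 c'v).
apply: IH => //.
- apply: leq_trans (leq_card_setU _ _) _.
  by rewrite cards1 [#|K|](cardsD1 [set u; w]) uwK addnC.
- by apply: simple_graph_setU1 uv; apply: simple_graph_subset sK; apply: subsetDl.
- by rewrite !inE eqxx orbT.
- move=> c'u; rewrite c'u in cc1 c'c.
  by apply: deg_gt1_connect cc1 _ cv; rewrite ?v1 1?eq_sym // !inE eqxx orbT.
Qed.

Lemma cat_num_add_leaves K c :
  (forall D, #|D| <= #|K| -> leaf_twin_harmless D) ->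
  simple_graph K -> deg K v = 0 -> deg K x = 0 -> c != v -> c != x -> deg K c != 0 ->
  cat_num (K :|: [set [set u; v]] :|: [set [set u; x]]) c <= 1 + cat_reply K c.
Proof.
move=> IH sK v0 x0 cv cx; have [cu|ncu] := boolP (connect (adj K) c u).
  exact: cat_num_add_leaves_near.
exact: cat_num_add_leaves_far.
Qed.

Lemma cat_reply_add_leaf_twin D c :
  (forall D', #|D'| <= #|D| -> leaf_twin_harmless D') ->
  simple_graph D -> [set u; v] \in D -> deg D v <= 1 -> deg D x = 0 -> c != x -> c != v ->
  cat_reply (D :|: [set [set u; x]]) c <= cat_reply D c.
Proof.
move=> IH sD uvD v1 x0 cx cv; apply: cat_reply_le => c' cc' c'c.
have := connect_add_pendant ux x0 cx cc'.
case: (eqVneq c' x) => [-> cu|c'x cc1].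
  exact: leq_trans (cat_num_deg_le1 (deg_pendant_end u x0)) (cat_reply_gt0 uvD uv cu).
case: (eqVneq c' v) => [c'v|c'v]; rewrite ?c'v in cc1 c'c *.
  have vuD : [set v; u] \in D by rewrite setUC.
  apply: leq_trans (cat_num_deg_le1 _) (cat_reply_gt0 vuD _ cc1); last by rewrite eq_sym.
  by rewrite deg_setU1_notin ?v_notin_ux.
apply: leq_trans (leq_cat_reply cc1 c'c); apply: IH => // c'u; rewrite c'u in cc1 c'c.
by apply: deg_gt1_connect cc1 _ cv; rewrite 1?eq_sym.
Qed.

Lemma leaf_twin_harmless_step D :
  (forall D', #|D'| < #|D| -> leaf_twin_harmless D') -> leaf_twin_harmless D.
Proof.
move=> IH c sD uvD v1 x0 cx cu.
case: (eqVneq c v) => [->|cv].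
  apply: (@leq_trans 1); first by apply: cat_num_deg_le1; rewrite deg_setU1_notin ?v_notin_ux.
  by apply: cat_num_gt0; apply/deg_gt0P; exists [set u; v]; rewrite ?set22.
have [c0|dD] := eqVneq (deg D c) 0.
  have c_u : c != u.
    by apply: contraTneq (introT eqP c0) => ->; apply/deg_gt0P; exists [set u; v]; rewrite ?set21.
  by rewrite !cat_num_deg0 // deg_setU1_notin // !inE negb_or c_u.
set F := D :|: _.
have [e eD ->] := cat_num_opt dD.
have smaller : #|D :\ e| < #|D| by rewrite (cardsD1 e D) eD.
have IH' D' : #|D'| <= #|D :\ e| -> leaf_twin_harmless D' by move/leq_ltn_trans/(_ smaller)/IH.
have sDe : simple_graph (D :\ e) by apply: simple_graph_subset sD; apply: subsetDl.
have x0' : deg (D :\ e) x = 0 by apply: deg0_subset (subsetDl _ _) x0.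
case: (eqVneq e [set u; v]) => [euv|euv].
  have -> : F = D :\ e :|: [set [set u; v]] :|: [set [set u; x]].
    by rewrite /F euv [D :\ _ :|: _]setUC setD1K.
  apply: cat_num_add_leaves => //.
    apply/eqP/deg0P=> f; rewrite !inE => /andP[fuv fD]; apply: contraNN fuv => vf.
    by rewrite euv; apply/eqP; apply: deg_le1_uniq v1 fD vf uvD (set22 _ _).
  case: (eqVneq c u) => [cuE|c_u].
    by rewrite -lt0n -ltnS; apply: leq_trans (cu cuE) _; rewrite -cuE deg_setD1.
  have [f fD cf] := deg_gt0P _ _ dD; apply/deg_gt0P; exists f => //.
  rewrite !inE fD andbT euv; apply: contraNneq c_u => fuv.
  by move: cf; rewrite fuv => /set2P [->|cvE]; [rewrite eqxx | rewrite cvE eqxx in cv].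
have eux : e != [set u; x] by apply: contraNneq (deg0_notin x0 eD) => ->; apply: set22.
apply: leq_trans (cat_num_le_del c (_ : e \in F)) _; first by rewrite inE eD.
rewrite leq_add2l /F setU1D1 //; apply: cat_reply_add_leaf_twin => //.
  by rewrite !inE eq_sym euv.
exact: leq_trans (deg_subset _ (subsetDl _ _)) v1.
Qed.

Lemma leaf_twin_harmlessP D : leaf_twin_harmless D.
Proof. by elim/card_ind: D => D; apply: leaf_twin_harmless_step. Qed.

End LeafTwin.

Lemma imsetD1_inj (aT rT : finType) (f : aT -> rT) (A : {set aT}) a :
  injective f -> f @: (A :\ a) = f @: A :\ f a.
Proof.
move=> f_inj; apply/setP=> y; apply/imsetP/setD1P => [[z] |[ya /imsetP [z zA yz]]].
  by rewrite !inE => /andP[za zA] ->; rewrite (inj_eq f_inj) za imset_f.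
by exists z; rewrite // !inE zA andbT -(inj_eq f_inj) -yz.
Qed.

Section LiftGraph.
Variable T : finType.
Implicit Types (E : {set {set T}}) (e : {set T}) (a b : T).

Definition lift_graph E : {set {set option T}} := (fun e => Some @: e) @: E.

Lemma imset_Some_inj : injective (fun e : {set T} => Some @: e).
Proof. exact: imset_inj Some_inj. Qed.

Lemma mem_lift_graph E e : (Some @: e \in lift_graph E) = (e \in E).
Proof. exact: mem_imset imset_Some_inj. Qed.

Lemma lift_graph2 E a b : ([set Some a; Some b] \in lift_graph E) = ([set a; b] \in E).
Proof. by rewrite -mem_lift_graph imsetU !imset_set1. Qed.

Lemma None_notin_lift E f : f \in lift_graph E -> None \notin f.
Proof. by case/imsetP=> e _ ->; apply/imsetP=> -[]. Qed.

Lemma deg_lift_graph_None E : deg (lift_graph E) None = 0.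
Proof. by apply/eqP/deg0P=> f /None_notin_lift. Qed.

Lemma simple_lift_graph E : simple_graph E -> simple_graph (lift_graph E).
Proof. by move=> sE f /imsetP [e eE ->]; rewrite (card_imset _ Some_inj); apply: sE. Qed.

Lemma lift_graphD1 E e : lift_graph (E :\ e) = lift_graph E :\ (Some @: e).
Proof. exact: imsetD1_inj imset_Some_inj. Qed.

Lemma deg_lift_graph E a : deg (lift_graph E) (Some a) = deg E a.
Proof.
rewrite /deg -(card_imset _ imset_Some_inj); apply: eq_card => f.
rewrite inE; apply/andP/imsetP => [[/imsetP [e eE ->] ae]|[e]].
  by exists e; rewrite // inE eE -(mem_imset _ _ Some_inj).
by rewrite inE => /andP[eE ae] ->; rewrite mem_lift_graph (mem_imset _ _ Some_inj).
Qed.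

Lemma connect_lift_graph E a c : connect (adj (lift_graph E)) (Some a) c ->
  exists2 b, c = Some b & connect (adj E) a b.
Proof.
apply: (connect_ind (P := fun c => exists2 b, c = Some b & connect (adj E) a b)).
  by exists a; rewrite ?connect0.
move=> _ [b|] [b' -> ab']; last by move/None_notin_lift; rewrite !inE eqxx orbT.
by rewrite /adj lift_graph2 => b'b; exists b; rewrite // (connect_trans ab' (connect1 b'b)).
Qed.

Lemma connect_lift_graphE E a b :
  connect (adj (lift_graph E)) (Some a) (Some b) = connect (adj E) a b.
Proof.
apply/idP/idP => [/connect_lift_graph [b' [->]] //|].
apply: (connect_ind (P := fun b => connect (adj (lift_graph E)) (Some a) (Some b))).
  exact: connect0.
by move=> y z ay yz; apply: connect_trans ay (connect1 _); rewrite /adj lift_graph2.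
Qed.

Lemma cat_num_lift_graph E a : cat_num (lift_graph E) (Some a) = cat_num E a.
Proof.
elim/card_ind: E a => E IH a.
have [d0|dE] := eqVneq (deg E a) 0.
  by rewrite !cat_num_deg0 // deg_lift_graph.
have dE' : deg (lift_graph E) (Some a) != 0 by rewrite deg_lift_graph.
have smaller e : e \in E -> #|E :\ e| < #|E| by rewrite (cardsD1 e E) => ->.
apply/eqP; rewrite eqn_leq; apply/andP; split.
  have [e eE ->] := cat_num_opt dE.
  apply: leq_trans (cat_num_le_del _ (_ : Some @: e \in _)) _; first by rewrite mem_lift_graph.
  rewrite leq_add2l -lift_graphD1; apply: cat_reply_le => c ac ca.
  have [b cb ab] := connect_lift_graph ac; rewrite cb IH ?smaller //.
  by apply: leq_cat_reply ab _; rewrite cb (inj_eq Some_inj) in ca.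
have [f /imsetP [e eE ->] ->] := cat_num_opt dE'.
apply: leq_trans (cat_num_le_del _ eE) _; rewrite leq_add2l -lift_graphD1.
apply: cat_reply_le => b ab ba; rewrite -IH ?smaller //.
by apply: leq_cat_reply; rewrite ?connect_lift_graphE ?(inj_eq Some_inj).
Qed.

Lemma catG_lift E (F : {set {set option T}}) :
  (forall a, cat_num F (Some a) = cat_num E a) -> cat_num F None <= catG E ->
  catG F = catG E.
Proof.
move=> FE FN; apply/eqP; rewrite eqn_leq; apply/andP; split; apply/bigmax_leqP => c _.
  by case: c => [a|] //; rewrite FE; apply: leq_bigmax.
by rewrite -FE; apply: (leq_bigmax (Some c)).
Qed.

End LiftGraph.

Unset Implicit Arguments.

Theorem mainTheorem3 (T : finType) (E : {set {set T}}) (u v : T) :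
  simple_graph E ->
  connected_graph E ->
  [set u; v] \in E ->
  2 <= deg E u ->
  deg E v = 1 ->
  (forall a : T, cat_num (add_leaf E u) (Some a) = cat_num E a) /\
  cat_num (add_leaf E u) None = 1 /\
  catG (add_leaf E u) = catG E.
Proof.
move=> sE _ uvE du dv.
have uv : u != v by move: (sE _ uvE); rewrite cards2; case: (u != v).
have Gv : add_leaf E u = lift_graph E :|: [set [set Some u; None]] by [].
have uxG : [set Some u; None] \in add_leaf E u by rewrite Gv !inE eqxx orbT.
have leaf_None : cat_num (add_leaf E u) None = 1.
  apply/eqP; rewrite eqn_leq Gv cat_num_deg_le1 ?deg_pendant_end ?deg_lift_graph_None //= -Gv.
  by apply: cat_num_gt0; apply/deg_gt0P; exists [set Some u; None]; rewrite ?set22.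
have lifted a : cat_num (add_leaf E u) (Some a) = cat_num E a.
  rewrite -[cat_num E a]cat_num_lift_graph; apply/eqP; rewrite eqn_leq; apply/andP; split.
    rewrite Gv; apply: (leaf_twin_harmlessP (u := Some u) (v := Some v)) => //.
    - exact: simple_lift_graph.
    - by rewrite lift_graph2.
    - by rewrite deg_lift_graph dv.
    - exact: deg_lift_graph_None.
    - by rewrite deg_lift_graph.
  have <- : add_leaf E u :\ [set Some u; None] = lift_graph E.
    by rewrite Gv setUC setU1K //; apply/negP=> /None_notin_lift; rewrite set22.
  exact: cat_num_setD1 (Some a) uxG.
do 2!split=> //; apply: catG_lift lifted _; rewrite leaf_None.
apply: leq_trans (leq_bigmax u); apply: cat_num_gt0.
by apply/deg_gt0P; exists [set u; v]; rewrite ?set21.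
Qed.
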